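(* Let $\mathbf{b}\in H_{1,2,2}$ have odd norm. Then there exist units $\mathbf{u},\mathbf{u}_1$ of $H_{1,2,2}$ such that $\mathbf{b}\mathbf{u}\equiv\mathbf{u}_1\mathbf{b}\equiv 1 \pmod 2$, i.e. $\mathbf{b}\mathbf{u}-1\in 2H_{1,2,2}$ and $\mathbf{u}_1\mathbf{b}-1\in 2H_{1,2,2}$.
   Context: Let $\mathbf{i},\mathbf{j},\mathbf{k}$ be the standard quaternion units; $\overline{\mathbf{q}}$ is quaternion conjugation and $N(\mathbf{q})=\mathbf{q}\overline{\mathbf{q}}$. $H_{1,2,2}$ is the subring of the quaternions equal to the $\mathbb{Z}$-module generated by $\mathbf{v}_1=1$, $\mathbf{v}_2=\mathbf{i}$, $\mathbf{v}_3=\tfrac12(1+\mathbf{i}+\sqrt2\,\mathbf{j})$, $\mathbf{v}_4=\tfrac12(1+\mathbf{i}+\sqrt2\,\mathbf{k})$. A unit is an element invertible in $H_{1,2,2}$ (equivalently of norm 1). *)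

(* Quaternions over a real closed field R (which contains sqrt 2). *)
From HB Require Import structures.
From mathcomp Require Import all_boot all_order all_algebra.
Set Implicit Arguments. Unset Strict Implicit. Unset Printing Implicit Defensive.
Import Order.TTheory GRing.Theory Num.Theory.
Local Open Scope ring_scope.

Section Quat.
Variable R : rcfType.

Record quat := Quat { q0 : R; q1 : R; q2 : R; q3 : R }.

Definition qadd (a b : quat) : quat :=
  Quat (q0 a + q0 b) (q1 a + q1 b) (q2 a + q2 b) (q3 a + q3 b).

(* Hamilton product with i^2 = j^2 = k^2 = ijk = -1 *)
Definition qmul (a b : quat) : quat :=
  Quat (q0 a * q0 b - q1 a * q1 b - q2 a * q2 b - q3 a * q3 b)
       (q0 a * q1 b + q1 a * q0 b + q2 a * q3 b - q3 a * q2 b)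
       (q0 a * q2 b - q1 a * q3 b + q2 a * q0 b + q3 a * q1 b)
       (q0 a * q3 b + q1 a * q2 b - q2 a * q1 b + q3 a * q0 b).

Definition qscale (c : R) (a : quat) : quat :=
  Quat (c * q0 a) (c * q1 a) (c * q2 a) (c * q3 a).

Definition qreal (c : R) : quat := Quat c 0 0 0.
Definition qone : quat := qreal 1.
Definition qi : quat := Quat 0 1 0 0.
Definition qj : quat := Quat 0 0 1 0.
Definition qk : quat := Quat 0 0 0 1.

Definition qconj (a : quat) : quat := Quat (q0 a) (- q1 a) (- q2 a) (- q3 a).
Definition qN (a : quat) : quat := qmul a (qconj a).

Definition qsub (a b : quat) : quat := qadd a (qscale (-1) b).

(* Z-basis of H_{1,2,2} *)
Definition v1 : quat := qone.
Definition v2 : quat := qi.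
Definition v3 : quat :=
  qscale (2^-1) (qadd (qadd qone qi) (qscale (Num.sqrt 2) qj)).
Definition v4 : quat :=
  qscale (2^-1) (qadd (qadd qone qi) (qscale (Num.sqrt 2) qk)).

Definition inH (q : quat) : Prop :=
  exists a b c d : int,
    q = qadd (qadd (qscale a%:~R v1) (qscale b%:~R v2))
             (qadd (qscale c%:~R v3) (qscale d%:~R v4)).

Definition in2H (q : quat) : Prop := exists h, inH h /\ q = qscale 2 h.

Definition unitH (u : quat) : Prop :=
  inH u /\ exists v, inH v /\ qmul u v = qone /\ qmul v u = qone.

Definition odd_norm (b : quat) : Prop :=
  exists n : nat, odd n /\ qN b = qreal n%:R.

End Quat.

(* Every element of odd norm is congruent mod 2 to a unit u0: each of the 12
   residue classes of odd norm in H/2H contains a unit.  Writing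
   b = u0 + 2w, the unit u = u1 = u0^-1 = conj u0 works, because
   b u - 1 = 2 w u and u b - 1 = 2 u w. *)
From mathcomp Require Import all_boot all_order all_algebra.
From mathcomp Require Import zify ring lra.
Set Implicit Arguments. Unset Strict Implicit. Unset Printing Implicit Defensive.
Import Order.TTheory GRing.Theory Num.Theory.
Local Open Scope ring_scope.

(* The norm of [a v1 + b v2 + c v3 + d v4], see [qN_hquat] below. *)
Definition hnorm (a b c d : int) : int :=
  a * a + b * b + (c + d) * (a + b) + c * c + c * d + d * d.

Lemma hnorm_odd_congr_unit (a b c d : int) : ~~ (2 %| hnorm a b c d)%Z ->
  exists x y z t : int, hnorm x y z t = 1 /\
    (2 %| a - x)%Z /\ (2 %| b - y)%Z /\ (2 %| c - z)%Z /\ (2 %| d - t)%Z.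
Proof.
have parity (x : int) : exists x', x = 2 * x' \/ x = 2 * x' + 1.
  by exists (x %/ 2)%Z; lia.
rewrite /hnorm; have [a' [->|->]] := parity a.
all: have [b' [->|->]] := parity b.
all: have [c' [->|->]] := parity c.
all: have [d' [->|->]] := parity d.
all: move=> odd_n; try by exfalso; lia.
- by exists 0, 0, 0, 1; lia.
- by exists 0, 0, 1, 0; lia.
- by exists 0, 0, 1, (-1); lia.
- by exists 0, 1, 0, 0; lia.
- by exists 0, 1, 0, (-1); lia.
- by exists 0, 1, (-1), 0; lia.
- by exists 1, 0, 0, 0; lia.
- by exists 1, 0, 0, (-1); lia.
- by exists 1, 0, (-1), 0; lia.
- by exists 1, 1, 0, (-1); lia.
- by exists 1, 1, (-1), 0; lia.
- by exists 1, 1, (-1), (-1); lia.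
Qed.

Section Quaternions.
Variable R : rcfType.
Implicit Types (x y u w : quat R) (k : R).

Lemma qmul_conjl x : qmul (qconj x) x = qN x.
Proof. by case: x => *; rewrite /qN /qmul /=; congr Quat; ring. Qed.

Lemma qsub_mul_addl x y w k : qmul x y = qone R ->
  qsub (qmul (qadd x (qscale k w)) y) (qone R) = qscale k (qmul w y).
Proof.
case: x y w => [x0 x1 x2 x3] [y0 y1 y2 y3] [w0 w1 w2 w3] [E0 E1 E2 E3].
by rewrite /qsub /qmul /qadd /qscale /qone /qreal /=; congr Quat; lra.
Qed.

Lemma qsub_mul_addr x y w k : qmul y x = qone R ->
  qsub (qmul y (qadd x (qscale k w))) (qone R) = qscale k (qmul y w).
Proof.
case: x y w => [x0 x1 x2 x3] [y0 y1 y2 y3] [w0 w1 w2 w3] [E0 E1 E2 E3].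
by rewrite /qsub /qmul /qadd /qscale /qone /qreal /=; congr Quat; lra.
Qed.

Definition hquat (a b c d : int) : quat R :=
  qadd (qadd (qscale a%:~R (v1 R)) (qscale b%:~R (v2 R)))
       (qadd (qscale c%:~R (v3 R)) (qscale d%:~R (v4 R))).

Lemma inHP x : inH x <-> exists a b c d, x = hquat a b c d.
Proof. by []. Qed.

Let s2 : R := Num.sqrt 2 / 2.

Let mul_s2 k1 k2 : k1 * s2 * (k2 * s2) = k1 * k2 / 2.
Proof.
have sqrt2K : Num.sqrt (2 : R) ^+ 2 = 2 by rewrite sqr_sqrtr // ler0n.
by rewrite /s2 mulrACA -[_ / 2 * (_ / 2)]mulrACA -expr2 sqrt2K; field.
Qed.

Lemma hquatE a b c d : hquat a b c d =
  Quat (a%:~R + (c%:~R + d%:~R) / 2) (b%:~R + (c%:~R + d%:~R) / 2)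
       (c%:~R * s2) (d%:~R * s2).
Proof.
by rewrite /hquat /qadd /qscale /v1 /v2 /v3 /v4 /qone /qreal /qi /qj /qk /s2 /=;
  congr Quat; field.
Qed.

Lemma hquat_mul a b c d e f g h :
  qmul (hquat a b c d) (hquat e f g h) =
  hquat (a * e - b * f - b * g - c * g - d * f - d * g - d * h)
        (a * f + b * e + b * h + c * f + c * h - d * g)
        (a * g - b * h + c * e + c * g + d * f + d * g)
        (a * h + b * g - c * f + d * e + d * g + d * h).
Proof.
by rewrite !hquatE /qmul /=; congr Quat; rewrite ?mul_s2 !(rmorphD, rmorphB, rmorphM) /=; field.
Qed.

Lemma hquat_conj a b c d : qconj (hquat a b c d) = hquat (a + c + d) (- b) (- c) (- d).
Proof.
by rewrite !hquatE /qconj /=; congr Quat; rewrite !(rmorphD, rmorphN) /=; field.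
Qed.

Lemma hquat_add a b c d e f g h :
  qadd (hquat a b c d) (hquat e f g h) = hquat (a + e) (b + f) (c + g) (d + h).
Proof.
by rewrite !hquatE /qadd /=; congr Quat; rewrite !rmorphD /=; field.
Qed.

Lemma hquat_scale (k a b c d : int) :
  qscale k%:~R (hquat a b c d) = hquat (k * a) (k * b) (k * c) (k * d).
Proof.
by rewrite !hquatE /qscale /=; congr Quat; rewrite !rmorphM /=; field.
Qed.

Lemma hquat_real (k : int) : hquat k 0 0 0 = qreal k%:~R.
Proof. by rewrite hquatE /qreal; congr Quat; rewrite ?(mulr0z, add0r, mul0r, addr0). Qed.

Lemma qN_hquat a b c d : qN (hquat a b c d) = qreal (hnorm a b c d)%:~R.
Proof. by rewrite /qN hquat_conj hquat_mul -hquat_real /hnorm; congr hquat; ring. Qed.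

Lemma inH_mul x y : inH x -> inH y -> inH (qmul x y).
Proof.
move=> /inHP[a [b [c [d ->]]]] /inHP[e [f [g [h ->]]]].
by rewrite hquat_mul; eexists _, _, _, _.
Qed.

Lemma inH_conj x : inH x -> inH (qconj x).
Proof. by move=> /inHP[a [b [c [d ->]]]]; rewrite hquat_conj; eexists _, _, _, _. Qed.

Lemma unitH_conj u : inH u -> qN u = qone R -> unitH (qconj u).
Proof.
move=> Hu Nu; split; first exact: inH_conj.
by exists u; split; rewrite ?qmul_conjl.
Qed.

Lemma odd_norm_congr_unit x : inH x -> odd_norm x ->
  exists u w, [/\ inH u, inH w, qN u = qone R & x = qadd u (qscale 2 w)].
Proof.
move=> /inHP[a [b [c [d ->]]]] [n [odd_n]]; rewrite qN_hquat => /(congr1 (@q0 R)) /=.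
rewrite pmulrn => /intr_inj Nn.
have /hnorm_odd_congr_unit[e [f [g [h [Nu]]]]] : ~~ (2 %| hnorm a b c d)%Z by rewrite Nn; lia.
move=> [/dvdzP[w1 Ha] [/dvdzP[w2 Hb] [/dvdzP[w3 Hc] /dvdzP[w4 Hd]]]].
exists (hquat e f g h), (hquat w1 w2 w3 w4); split; try by eexists _, _, _, _.
  by rewrite qN_hquat Nu.
by rewrite (hquat_scale 2) hquat_add; congr hquat; lia.
Qed.

End Quaternions.

Theorem corollary9 (R : rcfType) (b : quat R) :
  inH b -> odd_norm b ->
  exists u u1 : quat R,
    unitH u /\ unitH u1 /\
    in2H (qsub (qmul b u) (qone R)) /\
    in2H (qsub (qmul u1 b) (qone R)).
Proof.
move=> Hb /(odd_norm_congr_unit Hb) [u0 [w [Hu0 Hw Nu0 ->]]].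
have Hu := unitH_conj Hu0 Nu0; have Hu' := inH_conj Hu0.
exists (qconj u0), (qconj u0); do 2!split=> //; split.
- exists (qmul w (qconj u0)); split; first exact: inH_mul.
  by rewrite qsub_mul_addl.
- exists (qmul (qconj u0) w); split; first exact: inH_mul.
  by rewrite qsub_mul_addr // qmul_conjl.
Qed.
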